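(* Let $E$ be a finite set, $S\subseteq 2^E$ a powerful set and $e\in E$. Then $e$ is a coloop of $S$ if and only if $\{e\}\in S$.
   Context: A set $S\subseteq 2^E$ is powerful if for every $X\subseteq E$ the number of members of $S$ that are subsets of $X$ is a power of $2$. An element $e\in E$ is a coloop of $S$ if there exists $T\subseteq 2^{E\setminus\{e\}}$ such that $S=\{X,\ X\cup\{e\} : X\in T\}$. *)

From mathcomp Require Import all_boot.
Set Implicit Arguments. Unset Strict Implicit. Unset Printing Implicit Defensive.

Definition powerful (E : finType) (S : {set {set E}}) : Prop :=
  forall X : {set E}, exists k : nat, #|[set A in S | A \subset X]| = 2 ^ k.

Definition coloop (E : finType) (S : {set {set E}}) (e : E) : Prop :=
  exists T : {set {set E}},
    (forall X, X \in T -> e \notin X) /\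
    S = T :|: [set e |: X | X in T].

From mathcomp Require Import all_boot.
From mathcomp Require Import zify.

(* A power of 2 is never 0, so the empty set lies in every powerful family;
   hence if e is a coloop, [{e} = e |: set0] is in S.  Conversely, e is a
   coloop exactly when [e |: X \in S = (X \in S)] for all X avoiding e, which
   given [{e} \in S] we prove by induction on X, the case X = set0 being that
   hypothesis.  The members of S below [e |: X] are those below X together
   with the [e |: B \in S], B below X; by induction both kinds agree on the p
   proper subsets of X in S (p > 0, as set0 is one of them), so there are
   [2p + (X \in S) + (e |: X \in S)] of them.  This power of 2 is at least 2,
   hence even, forcing the two booleans to agree. *)

Lemma eq_bool_of_pow2_double (b c : bool) (p k : nat) :
  0 < p -> 2 ^ k = b + c + p.*2 -> b = c.
Proof.
move=> p_gt0; case: k => [|k]; first by lia.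
by rewrite expnS; case: b; case: c => //; lia.
Qed.

Section PowerfulFamilies.

Variable E : finType.
Implicit Types (S : {set {set E}}) (A B X Y : {set E}) (e : E).

Definition below S X := [set A in S | A \subset X].

Definition contraction S e := [set B | e |: B \in S].

Lemma setU1_inj e X Y : e \notin X -> e \notin Y -> e |: X = e |: Y -> X = Y.
Proof. by move=> eX eY eXY; rewrite -(setU1K eX) -(setU1K eY) eXY. Qed.

Lemma set0_in_powerful S : powerful S -> set0 \in S.
Proof.
move=> /(_ set0) [k Hk].
have : 0 < #|below S set0| by rewrite Hk expn_gt0.
by case/card_gt0P => A; rewrite inE subset0 => /andP[AS /eqP <-].
Qed.

Lemma card_below_proper S X :
  #|below S X| = (X \in S) + #|[set A in S | A \proper X]|.
Proof.
rewrite (cardsD1 X) !inE subxx andbT; congr addn.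
by apply: eq_card => A; rewrite !inE properEneq andbCA andbA.
Qed.

Lemma card_below_setU1 S e X : e \notin X ->
  #|below S (e |: X)| = #|below S X| + #|below (contraction S e) X|.
Proof.
move=> eX; have eB B : B \subset X -> e \notin B.
  by move=> BX; apply: contra eX; apply: subsetP.
have without_e :
    below S (e |: X) :&: [set A : {set E} | e \notin A] = below S X.
  apply/setP => A; rewrite !inE; case eA: (e \in A); rewrite ?andbF //=.
    by apply/esym/andP => -[_ /eB]; rewrite eA.
  rewrite andbT; congr andb; apply/subsetP/subsetP => AX x xA.
    by have /setU1P[xe|//] := AX x xA; rewrite -xe xA in eA.
  by rewrite in_setU1 AX ?orbT.
have with_e : below S (e |: X) :\: [set A : {set E} | e \notin A] =
              [set e |: B | B in below (contraction S e) X].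
  apply/setP => A; rewrite !inE negbK.
  apply/andP/imsetP => [[eA /andP[AS AeX]] | [B]].
    exists (A :\ e); last by rewrite setD1K.
    rewrite !inE setD1K // AS; apply/subsetP => x.
    by rewrite !inE => /andP[xe /(subsetP AeX)]; rewrite in_setU1 (negbTE xe).
  by rewrite !inE => /andP[BS BX] ->; rewrite setU11 BS setUS.
rewrite -(cardsID [set A : {set E} | e \notin A]) without_e with_e.
rewrite card_in_imset // => B1 B2.
by rewrite !inE => /andP[_ /eB ?] /andP[_ /eB ?]; apply: setU1_inj.
Qed.

Lemma coloopP S e :
  coloop S e <-> forall X, e \notin X -> (e |: X \in S) = (X \in S).
Proof.
split=> [[T [eT ->]] X eX | closedS].
  rewrite !in_setU; apply/orP/orP => [[/eT|/imsetP[Y YT /setU1_inj eXY]]|[XT|]].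
  - by rewrite setU11.
  - by left; rewrite eXY // eT.
  - by right; apply/imsetP; exists X.
  - by case/imsetP => Y _ XeY; rewrite XeY setU11 in eX.
exists [set A in S | e \notin A]; split=> [X|]; first by rewrite inE => /andP[].
apply/setP => A; rewrite !inE; apply/idP/orP => [AS | [/andP[] //|]].
  have [eA|] := boolP (e \in A); last by left; rewrite AS.
  right; apply/imsetP; exists (A :\ e); last by rewrite setD1K.
  have eAe : e \notin A :\ e by rewrite !inE eqxx.
  by rewrite inE eAe andbT -closedS // setD1K.
by case/imsetP => X; rewrite inE => /andP[XS eX] ->; rewrite closedS.
Qed.

Lemma powerful_setU1_step S e X : powerful S -> [set e] \in S -> e \notin X ->
  (forall B, B \proper X -> (e |: B \in S) = (B \in S)) ->
  (e |: X \in S) = (X \in S).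
Proof.
move=> powS eS eX IH; have S0 : set0 \in S by exact: set0_in_powerful.
have [->|X0] := eqVneq X set0; first by rewrite setU0 eS S0.
have [k] := powS (e |: X); rewrite card_below_setU1 // !card_below_proper.
have -> : #|[set B in contraction S e | B \proper X]| =
          #|[set A in S | A \proper X]|.
  apply: eq_card => B; rewrite !inE.
  by have [/IH ->|] := boolP (B \proper X); rewrite ?andbF.
rewrite inE; set p := #|_| => count.
apply/esym/(@eq_bool_of_pow2_double _ _ p k).
  by apply/card_gt0P; exists set0; rewrite !inE S0 proper0.
by rewrite -count addnACA addnn.
Qed.

End PowerfulFamilies.

Theorem theorem3 (E : finType) (S : {set {set E}}) (e : E) :
  powerful S -> (coloop S e <-> [set e] \in S).
Proof.
move=> powS; rewrite coloopP; split=> [closedS | eS X].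
  by rewrite -[[set e]]setU0 closedS ?inE // set0_in_powerful.
have [n] := ubnP #|X|; elim: n X => // n IHn X ltXn eX.
apply: powerful_setU1_step => // B ltBX.
apply: IHn; first exact: leq_trans (proper_card ltBX) ltXn.
by apply: contra eX; apply: subsetP (proper_sub ltBX) e.
Qed.
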